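(* Any deterministic distributed dynamic data structure for $2$-hop neighborhood listing that handles edge insertions and deletions requires $\Omega\left(\frac{n}{\log n}\right)$ amortized rounds.
   Context: Highly dynamic network model: a synchronous network on a fixed set $V$ of $n$ nodes with unique identifiers starts as the empty graph; at the beginning of round $i$ the graph is $G_i=(V,E_i)$, obtained from the previous graph by an adversary inserting and/or deleting an arbitrary (unbounded) set of edges. At the start of each round every node is notified only of the insertions/deletions of edges incident to it; then each node may send a message of $O(\log n)$ bits to each of its current neighbors. A distributed dynamic data structure consists of a local part $DS_v$ at each node $v$; at the end of every round, $DS_v$ may be queried and must answer immediately, without any further communication, either with a correct answer or with $\texttt{inconsistent}$. The amortized round complexity is at most $c$ if for every round $i$, the number of rounds up to round $i$ in which at least one node $v$ has $DS_v$ in an inconsistent state, divided by the total number of topology changes that occurred up to round $i$, is at most $c$. Let $E^{v,2}_i$ be the set of edges of $G_i$ incident to $v$ or to a neighbor of $v$. $2$-hop neighborhood listing: $DS_v$ must respond at the end of round $i$ to a query $\{u,w\}$ with $\texttt{true}$ if $\{u,w\}\in E^{v,2}_i$, $\texttt{false}$ otherwise, or $\texttt{inconsistent}$ (equivalently, membership listing of the 3-vertex path $v-u-w$). *)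

From mathcomp Require Import all_boot.
Set Implicit Arguments. Unset Strict Implicit. Unset Printing Implicit Defensive.

(* A dynamic graph on the node set 'I_n: G i is the graph at round i
   (G 0 is the initial graph, which must be empty). *)
Definition dyn_graph (n : nat) := nat -> rel 'I_n.

Definition valid_dyn (n : nat) (G : dyn_graph n) : Prop :=
  (forall u v, G 0 u v = false) /\
  (forall i u v, G i u v = G i v u) /\
  (forall i u, G i u u = false).

(* Notification of node v at the start of round i: incident insertions
   and deletions. *)
Definition inserted n (G : dyn_graph n) (i : nat) (v : 'I_n) : {set 'I_n} :=
  [set u | G i v u && ~~ G i.-1 v u].
Definition deleted n (G : dyn_graph n) (i : nat) (v : 'I_n) : {set 'I_n} :=
  [set u | G i.-1 v u && ~~ G i v u].

(* In each round, node v, in local state s and notified of the inserted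
   set ins and deleted set del of incident edges, sends
   [send v s ins del u] to each current neighbor u, then updates its state
   with [recv] from the messages received ([None] = u is not a neighbor).
   [answer s u w] is the immediate answer of DS_v (in state s) to the query
   {u,w}: [Some b] is an answer, [None] is "inconsistent". *)
Record dyn_alg (n : nat) := DynAlg {
  state : Type;
  init : 'I_n -> state;
  send : 'I_n -> state -> {set 'I_n} -> {set 'I_n} -> 'I_n -> seq bool;
  recv : 'I_n -> state -> {set 'I_n} -> {set 'I_n} ->
         ('I_n -> option (seq bool)) -> state;
  answer : state -> 'I_n -> 'I_n -> option bool
}.
Arguments state {n} d.
Arguments init {n} d _.
Arguments send {n} d _ _ _ _ _.
Arguments recv {n} d _ _ _ _ _.
Arguments answer {n} d _ _ _.

Fixpoint exec n (A : dyn_alg n) (G : dyn_graph n) (i : nat) : 'I_n -> state A :=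
  match i with
  | 0 => init A
  | k.+1 =>
      let s := exec A G k in
      fun v => recv A v (s v) (inserted G k.+1 v) (deleted G k.+1 v)
        (fun u => if G k.+1 u v
                  then Some (send A u (s u) (inserted G k.+1 u) (deleted G k.+1 u) v)
                  else None)
  end.

Definition msg_bounded n (A : dyn_alg n) (B : nat) : Prop :=
  forall v s ins del u, size (send A v s ins del u) <= B.

Definition two_hop n (G : dyn_graph n) (i : nat) (v u w : 'I_n) : bool :=
  G i u w && [|| u == v, w == v, G i v u | G i v w].

Definition correct_2hop n (A : dyn_alg n) : Prop :=
  forall G : dyn_graph n, valid_dyn G ->
  forall i (v u w : 'I_n) (b : bool), 0 < i ->
    answer A (exec A G i v) u w = Some b -> b = two_hop G i v u w.

Definition inconsistent_round n (A : dyn_alg n) (G : dyn_graph n) (i : nat) : bool :=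
  [exists v : 'I_n, [exists u : 'I_n, [exists w : 'I_n,
     answer A (exec A G i v) u w == None]]].

Definition inconsistent_count n (A : dyn_alg n) (G : dyn_graph n) (i : nat) : nat :=
  \sum_(1 <= k < i.+1) inconsistent_round A G k.

Definition changes n (G : dyn_graph n) (k : nat) : nat :=
  #|[set p : 'I_n * 'I_n | (p.1 < p.2) && (G k p.1 p.2 != G k.-1 p.1 p.2)]|.

Definition total_changes n (G : dyn_graph n) (i : nat) : nat :=
  \sum_(1 <= k < i.+1) changes G k.

(* The amortized round complexity is at most num/den (den > 0). *)
Definition amortized_le n (A : dyn_alg n) (num den : nat) : Prop :=
  forall G : dyn_graph n, valid_dyn G ->
  forall i, den * inconsistent_count A G i <= num * total_changes G i.

From mathcomp Require Import all_boot zify.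
From Stdlib Require Import FunctionalExtensionality.
Set Implicit Arguments. Unset Strict Implicit. Unset Printing Implicit Defensive.

(* The adversary keeps a hub adjacent to a secret set W of about n / 2 nodes
   and attaches a new node to the hub every P rounds. A newcomer that is
   consistent at the end of round r + 1 must answer every query {hub, x}
   correctly, so its state determines W; but all it has heard since its
   arrival are at most P messages of B bits from the hub, so at most 3 ^ (B P)
   sets W make round r + 1 consistent. For B = O(log n) and P ~ n / log n a
   union bound over the (n / 2) P rounds leaves some W for which every round
   is inconsistent, while the graph only ever gains its at most n star edges:
   the amortized complexity is at least (n / 2) P / n = Omega(n / log n). *)

Lemma exec_local n (A : dyn_alg n) (G G' : dyn_graph n) (v : 'I_n) r :
  (forall i y, i <= r -> G i v y = G' i v y) ->
  (forall i y, 0 < i <= r -> G i y v = G' i y v) ->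
  (forall i y, 0 < i <= r -> G i y v ->
     send A y (exec A G i.-1 y) (inserted G i y) (deleted G i y) v =
     send A y (exec A G' i.-1 y) (inserted G' i y) (deleted G' i y) v) ->
  exec A G r v = exec A G' r v.
Proof.
elim: r => [//|r IH] eq_out eq_in eq_msg /=.
rewrite IH; last 3 first.
- by move=> i y i_le; apply/eq_out/leqW.
- by move=> i y /andP[i_gt0 i_le]; apply: eq_in; rewrite i_gt0 leqW.
- by move=> i y /andP[i_gt0 i_le]; apply: eq_msg; rewrite i_gt0 leqW.
have last_round : 0 < r.+1 <= r.+1 by rewrite leqnn.
have -> : inserted G r.+1 v = inserted G' r.+1 v.
  by apply/setP => y; rewrite !inE !eq_out ?leqnSn.
have -> : deleted G r.+1 v = deleted G' r.+1 v.
  by apply/setP => y; rewrite !inE !eq_out ?leqnSn.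
congr (recv A v _ _ _); apply: functional_extensionality => y.
rewrite -eq_in //; case Gyv: (G r.+1 y v) => //.
by rewrite (eq_msg r.+1 y last_round Gyv).
Qed.

Lemma union_bound (T : finType) (S : {set T}) R (F : 'I_R -> {set T}) M :
  (forall r, #|S :&: F r| <= M) -> R * M < #|S| ->
  exists2 x, x \in S & forall r, x \notin F r.
Proof.
move=> small_F card_S.
set U := \bigcup_(r < R) (S :&: F r).
have card_U : #|U| <= R * M.
  apply: (@leq_trans (\sum_(r < R) #|S :&: F r|)).
    rewrite /U; elim/big_rec2: _ => [|r m V _ le_Vm]; first by rewrite cards0.
    by rewrite (leq_trans (leq_card_setU _ _).1) ?leq_add2l.
  apply: (@leq_trans (\sum_(r < R) M)); first exact: leq_sum.
  by rewrite sum_nat_const card_ord.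
have /subsetPn[x xS xU] : ~~ (S \subset U).
  by apply: contraTN card_S => /subset_leq_card le_SU; rewrite -leqNgt (leq_trans le_SU).
exists x => // r; apply: contraNN xU => xF.
by apply/bigcupP; exists r => //; rewrite inE xS.
Qed.

Definition pad_bits B (s : seq bool) : {ffun 'I_B -> option bool} :=
  [ffun t : 'I_B => nth None (map Some s) t].

Lemma card_pad_bits B : #|{ffun 'I_B -> option bool}| = 3 ^ B.
Proof. by rewrite card_ffun card_option card_bool card_ord. Qed.

Lemma nth_map_Some (s : seq bool) t :
  nth None (map Some s) t = if t < size s then Some (nth false s t) else None.
Proof.
case: ltnP => t_size; first by rewrite (nth_map false).
by rewrite nth_default // size_map.
Qed.

Lemma pad_bits_inj B s s' : size s <= B -> size s' <= B ->
  pad_bits B s = pad_bits B s' -> s = s'.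
Proof.
move=> sB s'B eq_pad.
have eq_nth t : nth None (map Some s) t = nth None (map Some s') t.
  case: (ltnP t B) => [tB | Bt].
    by move/ffunP/(_ (Ordinal tB)): eq_pad; rewrite !ffunE.
  by rewrite !nth_default // size_map ?(leq_trans sB Bt) ?(leq_trans s'B Bt).
have eq_size : size s = size s'.
  apply/eqP; rewrite eqn_leq; apply/andP; split; rewrite leqNgt; apply/negP => lt_size.
  - by have := eq_nth (size s'); rewrite !nth_map_Some lt_size ltnn.
  - by have := eq_nth (size s); rewrite !nth_map_Some lt_size ltnn.
apply: (@eq_from_nth _ false) => // t t_size.
by have := eq_nth t; rewrite !nth_map_Some -eq_size t_size => -[].
Qed.

Definition edge_set n (G : dyn_graph n) i :=
  [set p : 'I_n * 'I_n | (p.1 < p.2) && G i p.1 p.2].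

Lemma total_changes_incr n (G : dyn_graph n) :
  (forall a b, G 0 a b = false) -> (forall k a b, G k a b -> G k.+1 a b) ->
  forall i, total_changes G i = #|edge_set G i|.
Proof.
move=> G0 G_incr; elim=> [|i IH].
  rewrite /total_changes big_geq //.
  by apply/esym/eq_card0 => p; rewrite !inE G0 andbF.
rewrite /total_changes big_nat_recr //= -/(total_changes G i) IH.
have sub_E : edge_set G i \subset edge_set G i.+1.
  by apply/subsetP => p; rewrite !inE => /andP[-> /G_incr].
have -> : changes G i.+1 = #|edge_set G i.+1 :\: edge_set G i|.
  apply: eq_card => p; rewrite !inE /=; case: (p.1 < p.2) => //=.
  by case: (G i p.1 p.2) (G_incr i p.1 p.2) => [->|] //; case: (G i.+1 p.1 p.2).
by rewrite cardsD (setIidPr sub_E) subnKC // subset_leq_card.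
Qed.

Section Adversary.
Variables n h P : nat.

Definition secrets := [set x : 'I_n | 0 < x < h].

Lemma card_secrets_ge : h <= n -> h.-1 <= #|secrets|.
Proof.
move=> h_le_n; have succ_lt (j : 'I_h.-1) : j.+1 < n by have := ltn_ord j; lia.
pose succ j := Ordinal (succ_lt j).
have succ_inj : injective succ by move=> i j [] /val_inj.
rewrite -[X in X <= _]card_ord -(card_imset _ succ_inj) subset_leq_card //.
by apply/subsetP => _ /imsetP[j _ ->]; rewrite inE /=; have := ltn_ord j; lia.
Qed.

Variable hub : 'I_n.
Hypotheses (hub0 : val hub = 0) (h_gt0 : 0 < h).

(* From round 1 on, the hub is adjacent to the secret set W and to the
   newcomers h, h + 1, ..., h + (i - 1) / P: a new node joins every P rounds. *)
Definition hub_nbr (W : {set 'I_n}) i (b : 'I_n) :=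
  (b \in W) || (h <= b <= h + i.-1 %/ P).

Definition adversary (W : {set 'I_n}) : dyn_graph n := fun i a b =>
  (0 < i) && ((a == hub) && hub_nbr W i b || (b == hub) && hub_nbr W i a).

Lemma adversary_incr W k a b : adversary W k a b -> adversary W k.+1 a b.
Proof.
have nbr_incr c : hub_nbr W k c -> hub_nbr W k.+1 c.
  rewrite /hub_nbr => /orP[-> // | /andP[h_le c_le]]; apply/orP; right.
  by rewrite h_le (leq_trans c_le) // leq_add2l; apply/leq_div2r/leq_pred.
rewrite /adversary => /andP[_ /orP[] /andP[-> /nbr_incr ->]] //.
by rewrite orbT.
Qed.

Lemma card_edge_set_adversary W i : #|edge_set (adversary W) i| <= n.
Proof.
have sub_star : edge_set (adversary W) i \subset [set (hub, b) | b : 'I_n].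
  apply/subsetP => -[a b]; rewrite inE /= => /and3P[lt_ab _ /orP[] /andP[/eqP a_hub _]].
    by rewrite a_hub imset_f.
  by move: lt_ab; rewrite a_hub hub0.
apply: leq_trans (subset_leq_card sub_star) _.
by rewrite (leq_trans (leq_imset_card _ _)) ?card_ord.
Qed.

Section SecretSet.
Variable W : {set 'I_n}.
Hypothesis W_sub : W \subset secrets.

Lemma hub_nbr_hub i : hub_nbr W i hub = false.
Proof.
rewrite /hub_nbr hub0 [h <= 0]leqNgt h_gt0 orbF.
by apply: contraTF W_sub => hubW; apply/subsetPn; exists hub; rewrite // inE hub0.
Qed.

Lemma adversary_valid : valid_dyn (adversary W).
Proof.
split=> [//|]; split=> [i a b | i a]; first by rewrite /adversary orbC.
by rewrite /adversary orbb; case: eqP => [->|]; rewrite ?hub_nbr_hub !andbF.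
Qed.

Lemma adversary_newcomer i (v y : 'I_n) : h <= v ->
  adversary W i v y = [&& 0 < i, y == hub & v <= h + i.-1 %/ P].
Proof.
move=> h_le_v; have v_secret : v \notin W.
  by apply: contraL h_le_v => /(subsetP W_sub); rewrite inE -ltnNge => /andP[].
have v_hub : (v == hub) = false.
  by apply: contraTF h_le_v => /eqP ->; rewrite hub0 -ltnNge.
by rewrite /adversary /hub_nbr v_hub (negbTE v_secret) h_le_v.
Qed.

Lemma adversary_newcomerC i (v y : 'I_n) : h <= v ->
  adversary W i y v = [&& 0 < i, y == hub & v <= h + i.-1 %/ P].
Proof. by move=> h_le_v; rewrite -adversary_newcomer // /adversary orbC. Qed.

Lemma adversary_hub_secret i (x : 'I_n) : x \in secrets -> 0 < i ->
  adversary W i hub x = (x \in W).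
Proof.
rewrite inE => /andP[x_gt0 x_lt_h] i_gt0.
by rewrite /adversary i_gt0 eqxx hub_nbr_hub andbF orbF /hub_nbr leqNgt x_lt_h orbF.
Qed.

End SecretSet.

Section Algorithm.
Variable A : dyn_alg n.

Definition hub_msg (W : {set 'I_n}) (v : 'I_n) k :=
  send A hub (exec A (adversary W) k hub) (inserted (adversary W) k.+1 hub)
    (deleted (adversary W) k.+1 hub) v.

(* The newcomer v = h + r / P is attached to the hub from round r / P * P + 1
   on, so up to round r + 1 it hears nothing but the hub's messages of the
   rounds r / P * P + 1, ..., r + 1. *)
Lemma newcomer_state_eq (W W' : {set 'I_n}) r (v : 'I_n) :
  W \subset secrets -> W' \subset secrets -> val v = h + r %/ P ->
  (forall k, r %/ P * P <= k <= r -> hub_msg W v k = hub_msg W' v k) ->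
  exec A (adversary W) r.+1 v = exec A (adversary W') r.+1 v.
Proof.
move=> W_sub W'_sub v_def eq_msg; have h_le_v : h <= v by rewrite v_def leq_addr.
apply: exec_local => [i y _ | i y _ | i y /andP[i_gt0 i_le]].
- by rewrite !adversary_newcomer.
- by rewrite !adversary_newcomerC.
rewrite adversary_newcomerC // => /and3P[_ /eqP -> v_le].
have window : r %/ P * P <= i.-1 <= r.
  apply/andP; split; last by lia.
  apply: leq_trans (leq_divM i.-1 P).
  by rewrite leq_mul2r -(leq_add2l h) -v_def v_le orbT.
by have := eq_msg _ window; rewrite /hub_msg prednK.
Qed.

Hypothesis A_correct : correct_2hop A.

Lemma consistent_answer (W : {set 'I_n}) r (v x : 'I_n) :
  W \subset secrets -> val v = h + r %/ P -> x \in secrets ->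
  ~~ inconsistent_round A (adversary W) r.+1 ->
  answer A (exec A (adversary W) r.+1 v) hub x = Some (x \in W).
Proof.
move=> W_sub v_def x_secret consistent.
case E: answer => [b|]; last first.
  case/negP: consistent; apply/existsP; exists v; apply/existsP; exists hub.
  by apply/existsP; exists x; rewrite E.
rewrite (A_correct (adversary_valid W_sub) (ltn0Sn r) E) /two_hop adversary_hub_secret //.
by rewrite adversary_newcomer ?v_def ?leq_addr // eqxx leqnn !orbT andbT.
Qed.

Lemma consistent_secret_eq (W W' : {set 'I_n}) r (v : 'I_n) :
  W \subset secrets -> W' \subset secrets -> val v = h + r %/ P ->
  ~~ inconsistent_round A (adversary W) r.+1 ->
  ~~ inconsistent_round A (adversary W') r.+1 ->
  (forall k, r %/ P * P <= k <= r -> hub_msg W v k = hub_msg W' v k) -> W = W'.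
Proof.
move=> W_sub W'_sub v_def cW cW' eq_msg; apply/setP => x.
case x_secret: (x \in secrets); last first.
  by rewrite (contraFF (subsetP W_sub x)) ?(contraFF (subsetP W'_sub x)).
apply: Some_inj; rewrite -(consistent_answer W_sub v_def x_secret cW).
rewrite -(consistent_answer W'_sub v_def x_secret cW').
by rewrite (newcomer_state_eq W_sub W'_sub v_def eq_msg).
Qed.

Lemma card_consistent_le B r (v : 'I_n) :
  0 < P -> msg_bounded A B -> val v = h + r %/ P ->
  #|powerset secrets :&: [set W | ~~ inconsistent_round A (adversary W) r.+1]|
    <= 3 ^ (B * P).
Proof.
move=> P_gt0 A_bounded v_def.
pose transcript W := [ffun t : 'I_P => pad_bits B (hub_msg W v (r %/ P * P + t))].
rewrite -(@card_in_imset _ _ transcript).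
  by rewrite (leq_trans (max_card _)) // card_ffun card_pad_bits card_ord -expnM.
move=> W W'; rewrite !inE => /andP[W_sub cW] /andP[W'_sub cW'] eq_tr.
apply: (consistent_secret_eq W_sub W'_sub v_def cW cW') => k /andP[k_ge k_le].
have t_lt : k - r %/ P * P < P by have := ltn_pmod r P_gt0; have := divn_eq r P; lia.
move/ffunP/(_ (Ordinal t_lt)): eq_tr; rewrite !ffunE /= subnKC //.
by apply: pad_bits_inj; apply: A_bounded.
Qed.

End Algorithm.
End Adversary.

Lemma hard_adversary n h P B (A : dyn_alg n) :
  0 < h <= n -> 0 < P -> msg_bounded A B -> correct_2hop A ->
  (n - h) * P * 3 ^ (B * P) < 2 ^ h.-1 ->
  exists2 G : dyn_graph n, valid_dyn G &
    inconsistent_count A G ((n - h) * P) = (n - h) * P /\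
    forall i, total_changes G i <= n.
Proof.
case/andP=> h_gt0 h_le_n P_gt0 A_bounded A_correct budget.
pose hub : 'I_n := Ordinal (leq_trans h_gt0 h_le_n).
have hub0 : val hub = 0 by [].
set R := (n - h) * P.
pose consistent (r : 'I_R) :=
  [set W | ~~ inconsistent_round A (adversary h P hub W) r.+1].
have [W] : exists2 W, W \in powerset (secrets n h) & forall r, W \notin consistent r.
  apply: union_bound => [r|]; last first.
    by apply: leq_trans budget _; rewrite card_powerset leq_exp2l // card_secrets_ge.
  have newcomer_lt : h + r %/ P < n.
    have : r %/ P < n - h by rewrite ltn_divLR.
    lia.
  exact: (card_consistent_le hub0 h_gt0 A_correct (v := Ordinal newcomer_lt)).
rewrite powersetE => W_sub W_incons.
have G_valid := adversary_valid P hub0 h_gt0 W_sub.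
exists (adversary h P hub W) => //; split=> [|i].
  rewrite /inconsistent_count (eq_big_nat _ _ (F2 := fun _ => 1)).
    by rewrite sum_nat_const_nat subn1 muln1.
  move=> k /andP[k_gt0 k_le].
  have k_lt : k.-1 < R by lia.
  by have := W_incons (Ordinal k_lt); rewrite inE negbK prednK // => ->.
rewrite (total_changes_incr (proj1 G_valid) (@adversary_incr _ _ _ _ W)).
exact: card_edge_set_adversary.
Qed.

Lemma leq_sq_exp2 L : L * L <= 4 * 2 ^ L.
Proof. by elim: L => [//|L IH]; have := ltn_expl L (isT : 1 < 2); rewrite expnS; nia. Qed.

Lemma leq_exp3_exp4 e : 3 ^ e <= 2 ^ (2 * e).
Proof. by rewrite expnM; elim: e => // e IH; rewrite !expnS leq_mul. Qed.

Section LargeNetwork.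
Variables C n : nat.
Hypothesis n_large : 2 ^ (64 * C.+1) <= n.

Local Notation K := (64 * C.+1).
Local Notation L := (trunc_log 2 n).
Local Notation P := ((2 * n) %/ (K * L)).+1.

Lemma n_ge64 : 64 <= n.
Proof. by apply: leq_trans n_large; rewrite -[64]/(2 ^ 6) leq_exp2l //; lia. Qed.

Lemma K_le_log : K <= L.
Proof. exact: trunc_log_max. Qed.

Lemma log_sq_le : L * L <= 4 * n.
Proof.
apply: leq_trans (leq_sq_exp2 L) _; rewrite leq_mul2l trunc_logP ?orbT //.
by have := n_ge64; lia.
Qed.

Lemma window_gt : 2 * n < K * L * P.
Proof.
by rewrite [_ * P]mulnC; apply: ltn_ceil; rewrite muln_gt0 (leq_trans _ K_le_log).
Qed.

Lemma window_le : K * L * P <= 2 * n + K * L.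
Proof. by rewrite [_ * P]mulnC mulSn addnC leq_add2r leq_divM. Qed.

Lemma amortization_gap : n * n < K * L * ((n - n./2) * P).
Proof.
have half : n <= 2 * (n - n./2) by have := n_ge64; lia.
rewrite mulnCA; move: window_gt half; generalize (K * L * P) (n - n./2) => KLP m.
nia.
Qed.

Lemma adversary_budget : (n - n./2) * P * 3 ^ (C * L * P) < 2 ^ (n./2).-1.
Proof.
have newcomer_rounds_lt : (n - n./2) * P < 2 ^ (2 * L + 3).
  have n_lt : n < 2 * 2 ^ L by rewrite -expnS trunc_log_ltn.
  have P_le : P <= (2 * n).+1 by rewrite ltnS leq_div.
  have -> : 2 ^ (2 * L + 3) = 2 ^ L * 2 ^ L * 8 by rewrite expnD [2 * L]mulnC expnM.
  move: n_lt P_le (leq_subr n./2 n).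
  by generalize (2 ^ L) P (n - n./2) => E p m; nia.
have exponent_le : 2 * L + 3 + 2 * (C * L * P) <= (n./2).-1.
  have KL_le : K * L <= L * L by rewrite leq_mul2r K_le_log orbT.
  move: window_le log_sq_le n_ge64 KL_le.
  by generalize L P => l p; lia.
apply: leq_ltn_trans (leq_mul (leqnn _) (leq_exp3_exp4 _)) _.
apply: leq_trans (_ : _ < 2 ^ (2 * L + 3) * 2 ^ (2 * (C * L * P))) _.
  by rewrite ltn_pmul2r ?expn_gt0.
by rewrite -expnD leq_exp2l.
Qed.

End LargeNetwork.

Theorem corollary6 :
  forall C : nat, exists K : nat, 0 < K /\ exists n0 : nat,
  forall n : nat, n0 <= n ->
  forall A : dyn_alg n,
    msg_bounded A (C * trunc_log 2 n) ->
    correct_2hop A ->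
    ~ amortized_le A n (K * trunc_log 2 n).
Proof.
move=> C; exists (64 * C.+1); split=> //; exists (2 ^ (64 * C.+1)).
move=> n n_large A A_bounded A_correct A_amortized.
have half_range : 0 < n./2 <= n by have := n_ge64 n_large; lia.
have [G G_valid [G_incons G_changes]] :=
  hard_adversary half_range (ltn0Sn _) A_bounded A_correct (adversary_budget n_large).
have := A_amortized G G_valid
  ((n - n./2) * ((2 * n) %/ (64 * C.+1 * trunc_log 2 n)).+1).
rewrite G_incons => /leq_trans/(_ (leq_mul (leqnn n) (G_changes _))).
by rewrite leqNgt amortization_gap.
Qed.
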